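(* Every obliviously-computable function $f:\mathbb{N}^d\to\mathbb{N}$ is nondecreasing, i.e. $\vec{a}\le\vec{b}$ componentwise implies $f(\vec{a})\le f(\vec{b})$.
   Context: A chemical reaction network (CRN) is a pair $(\mathcal{S},\mathcal{R})$ of a finite set of species and a finite set of reactions $(\vec{R},\vec{P})\in\mathbb{N}^{\mathcal{S}}\times\mathbb{N}^{\mathcal{S}}$. A configuration is $\vec{C}\in\mathbb{N}^{\mathcal{S}}$; a reaction is applicable if $\vec{R}\le\vec{C}$ and yields $\vec{C}-\vec{R}+\vec{P}$; reachability is via finite sequences of applicable reactions. To compute $f:\mathbb{N}^d\to\mathbb{N}$ the CRN has input species $X_1,\ldots,X_d$, output species $Y$, leader species $L$; the initial configuration $\vec{I}_{\vec{x}}$ has $\vec{x}(i)$ copies of $X_i$, one $L$, nothing else. $\vec{C}$ is stable if all configurations reachable from it have the same count of $Y$. The CRN stably computes $f$ if for every $\vec{x}$ and every $\vec{C}$ reachable from $\vec{I}_{\vec{x}}$ some stable $\vec{O}$ reachable from $\vec{C}$ has $\vec{O}(Y)=f(\vec{x})$. The CRN is output-oblivious if $Y$ is never a reactant. $f$ is obliviously-computable if stably computed by an output-oblivious CRN. *)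

From mathcomp Require Import all_boot.
From Stdlib Require Lists.List.
Set Implicit Arguments. Unset Strict Implicit. Unset Printing Implicit Defensive.

Definition config (S : finType) := S -> nat.

(* A reaction (R, P) with reactant and product vectors. *)
Definition reaction (S : finType) := (config S * config S)%type.

Definition cle (S : finType) (A B : config S) : Prop := forall s, A s <= B s.

Record CRN (d : nat) := {
  species : finType;
  reactions : seq (reaction species);
  inX : 'I_d -> species;
  outY : species;
  leaderL : species;
  inX_inj : injective inX;
  L_notin : forall i, inX i <> leaderL;
  Y_notin : forall i, inX i <> outY;
  Y_neq_L : outY <> leaderL
}.

Definition step d (N : CRN d) (C D : config (species N)) : Prop :=
  exists r, Stdlib.Lists.List.In r (reactions N) /\
    cle r.1 C /\ forall s, D s = C s - r.1 s + r.2 s.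
Arguments step {d} N _ _.

Inductive reach d (N : CRN d) : config (species N) -> config (species N) -> Prop :=
| reach_refl C : @reach d N C C
| reach_step C D E : @step d N C D -> @reach d N D E -> @reach d N C E.
Arguments reach {d} N _ _.

Definition init d (N : CRN d) (x : 'I_d -> nat) : config (species N) :=
  fun s => \sum_(i < d | inX N i == s) x i + (s == leaderL N).
Arguments init {d} N x _.

Definition stable d (N : CRN d) (C : config (species N)) : Prop :=
  forall D, reach N C D -> D (outY N) = C (outY N).
Arguments stable {d} N C.

Definition stably_computes d (N : CRN d) (f : ('I_d -> nat) -> nat) : Prop :=
  forall x C, reach N (init N x) C ->
    exists O, reach N C O /\ stable N O /\ O (outY N) = f x.
Arguments stably_computes {d} N f.

Definition output_oblivious d (N : CRN d) : Prop :=
  forall r, Stdlib.Lists.List.In r (reactions N) -> r.1 (outY N) = 0.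
Arguments output_oblivious {d} N.

Definition obliviously_computable d (f : ('I_d -> nat) -> nat) : Prop :=
  exists N : CRN d, output_oblivious N /\ stably_computes N f.

From mathcomp Require Import all_boot.
From mathcomp Require Import zify.
From Stdlib Require Import FunctionalExtensionality.

Set Implicit Arguments. Unset Strict Implicit. Unset Printing Implicit Defensive.

(* Extra molecules never disable a reaction, so a run from I_a can be replayed
   from I_b with the surplus I_b - I_a left untouched.  Since Y is never a
   reactant its count never decreases, hence every configuration reachable
   from the replayed one, in particular a stable one with output f(b), has
   at least as many Y as the configuration with output f(a) we started from. *)

Section Monotonicity.

Variables (d : nat) (N : CRN d).

Lemma step_addr (C D E : config (species N)) :
  step N C D -> step N (fun s => C s + E s) (fun s => D s + E s).
Proof.
move=> [r [r_in [r_le defD]]]; exists r; split => //; split=> s.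
  by have := r_le s; lia.
by rewrite defD; have := r_le s; lia.
Qed.

Lemma reach_addr (C D E : config (species N)) :
  reach N C D -> reach N (fun s => C s + E s) (fun s => D s + E s).
Proof.
elim=> [C0|C0 D0 E0 C0D0 _ IH]; first exact: reach_refl.
by apply: reach_step IH; apply: step_addr.
Qed.

Lemma cle_init (a b : 'I_d -> nat) :
  (forall i, a i <= b i) -> cle (init N a) (init N b).
Proof. by move=> le_ab s; rewrite /init leq_add2r; apply: leq_sum. Qed.

Lemma reach_init_le (a b : 'I_d -> nat) (C : config (species N)) :
  (forall i, a i <= b i) -> reach N (init N a) C ->
  exists2 C', reach N (init N b) C' & cle C C'.
Proof.
move=> le_ab aC; pose E s := init N b s - init N a s.
have -> : init N b = (fun s => init N a s + E s).
  by apply: functional_extensionality => s; rewrite subnKC ?cle_init.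
by exists (fun s => C s + E s); [exact: reach_addr | move=> s; apply: leq_addr].
Qed.

Lemma reach_outY_le (C D : config (species N)) :
  output_oblivious N -> reach N C D -> C (outY N) <= D (outY N).
Proof.
move=> oblN; elim=> [//|C0 D0 E0 [r [r_in [_ defD0]]] _ IH].
by apply: leq_trans IH; rewrite defD0 (oblN r r_in) subn0 leq_addr.
Qed.

End Monotonicity.

Theorem mainTheorem8 (d : nat) (f : ('I_d -> nat) -> nat) :
  obliviously_computable f ->
  forall a b : 'I_d -> nat, (forall i, a i <= b i) -> f a <= f b.
Proof.
move=> [N [oblN compN]] a b le_ab.
have [O [aO [_ <-]]] := compN a _ (reach_refl (init N a)).
have [O' bO' le_OO'] := reach_init_le le_ab aO.
have [O'' [O'O'' [_ <-]]] := compN b _ bO'.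
exact: leq_trans (le_OO' _) (reach_outY_le oblN O'O'').
Qed.
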